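(* Consider Algorithm iR2N (described in the context) and suppose (A1)–(A7) hold. Let $N\subseteq\mathbb{N}$ be an infinite index set and, for $k\in N$, let $s_{k,\mathrm{cp}}\in\operatorname{argmin}_s m_{\mathrm{cp}}(s;x_k,\nu_k^{-1})$ and $u_k\in\nabla f(x_k)+\partial\psi(s_{k,\mathrm{cp}};x_k)$ be such that $\{s_{k,\mathrm{cp}}\}_{k\in N}\to0$ and $\{u_k\}_{k\in N}\to0$ (such $N$, $s_{k,\mathrm{cp}}$, $u_k$ exist under these assumptions). Assume that $\{x_k\}_{k\in N}\to\bar x$ and that $$\limsup_{k\in N}\partial\psi(s_{k,\mathrm{cp}};x_k)\subseteq\partial\psi(0;\bar x).$$ Then $0\in\nabla f(\bar x)+\partial h(\bar x)$, i.e., $\bar x$ is stationary for $\min_x f(x)+h(x)$.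
   Context: Setting. $f:\mathbb{R}^n\to\mathbb{R}$ is continuously differentiable, $h:\mathbb{R}^n\to\mathbb{R}\cup\{+\infty\}$ is proper and lower semicontinuous; the problem is $\min_x f(x)+h(x)$. $\|\cdot\|$ is the Euclidean norm (spectral norm for matrices). For each $x$, approximations $\hat f(x)\in\mathbb{R}$ of $f(x)$ and $\hat\nabla f(x)\in\mathbb{R}^n$ of $\nabla f(x)$ are available. For each $x$, $\psi(\cdot;x):\mathbb{R}^n\to\mathbb{R}\cup\{+\infty\}$ is proper, lsc, satisfies $\psi(0;x)=h(x)$ and $\partial\psi(0;x)\subseteq\partial h(x)$ ($\partial$ = limiting subdifferential), and is uniformly prox-bounded: there is $\lambda>0$ such that for every $x$ and every $0<\lambda'<\lambda$, $w\mapsto\psi(w;x)+\tfrac{1}{2\lambda'}\|w\|^2$ is bounded below. For sets $\mathcal{A}_k\subseteq\mathbb{R}^n$, $\limsup_{k\in N}\mathcal{A}_k$ is the set of limits of all convergent sequences $\{a_k\}_{k\in N'}$ with $N'\subseteq N$ infinite and $a_k\in\mathcal{A}_k$. Models: $\varphi_{\mathrm{cp}}(s;x)=\hat f(x)+\hat\nabla f(x)^Ts$; $m_{\mathrm{cp}}(s;x,\nu^{-1})=\varphi_{\mathrm{cp}}(s;x)+\tfrac12\nu^{-1}\|s\|^2+\psi(s;x)$; for a symmetric $B(x)\in\mathbb{R}^{n\times n}$, $\varphi(s;x)=\hat f(x)+\hat\nabla f(x)^Ts+\tfrac12 s^TB(x)s$ and $m(s;x,\sigma)=\varphi(s;x)+\tfrac12\sigma\|s\|^2+\psi(s;x)$.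 Algorithm iR2N. Constants: $\kappa_f,\kappa_\nabla>0$, $0<\gamma_3\le 1<\gamma_1\le\gamma_2$, $0<\hat\eta_1\le\hat\eta_2<1$, $0<\theta_1<1<\theta_2$, $\sigma_{\min}>4\kappa_f\theta_1\theta_2^2/(\hat\eta_1(1-\theta_1))$, $\sigma_0\ge\sigma_{\min}$, $x_0\in\mathbb{R}^n$. At iteration $k=0,1,\dots$: choose symmetric $B_k=B(x_k)$; set $\nu_k=\theta_1/(\|B_k\|+\sigma_k)$; compute $\hat s_{k,\mathrm{cp}}$ with $m_{\mathrm{cp}}(\hat s_{k,\mathrm{cp}};x_k,\nu_k^{-1})\le m_{\mathrm{cp}}(0;x_k,\nu_k^{-1})$ and set $\hat\xi_{k,\mathrm{cp}}=(\varphi_{\mathrm{cp}}+\psi)(0;x_k)-(\varphi_{\mathrm{cp}}+\psi)(\hat s_{k,\mathrm{cp}};x_k)$; compute $s_k$ with $m(s_k;x_k,\sigma_k)\le m(\hat s_{k,\mathrm{cp}};x_k,\sigma_k)$; if $\|s_k\|>\theta_2\|\hat s_{k,\mathrm{cp}}\|$, reset $s_k=\hat s_{k,\mathrm{cp}}$ (repeated with refined $\hat f,\hat\nabla f$ until (A6) holds). Compute $\hat\rho_k=\dfrac{\hat f(x_k)+h(x_k)-\hat f(x_k+s_k)-h(x_k+s_k)}{\varphi(0;x_k)+\psi(0;x_k)-\varphi(s_k;x_k)-\psi(s_k;x_k)}$ with $\varphi(\cdot;x_k)$ using $B_k$. If $\hat\rho_k\ge\hat\eta_1$ set $x_{k+1}=x_k+s_k$,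 else $x_{k+1}=x_k$. Choose $\sigma_{k+1}\in[\gamma_3\sigma_k,\sigma_k]$ if $\hat\rho_k\ge\hat\eta_2$, $\sigma_{k+1}\in[\sigma_k,\gamma_1\sigma_k]$ if $\hat\eta_1\le\hat\rho_k<\hat\eta_2$, $\sigma_{k+1}\in[\gamma_1\sigma_k,\gamma_2\sigma_k]$ if $\hat\rho_k<\hat\eta_1$; then reset $\sigma_{k+1}=\max(\sigma_{k+1},\sigma_{\min})$. Assumptions. (A1) $|f(x+s)-f(x)-\nabla f(x)^Ts|\le\tfrac12L\|s\|^2$ for all $x,s$, for some $L\ge0$. (A2) $\|B_k\|\le\kappa_B$ for all $k$. (A3) $|\psi(s;x)-h(x+s)|\le\kappa_h\|s\|^2$ for all $x,s$. (A4) For all $k$, $\varphi(0;x_k)+\psi(0;x_k)-(\varphi(s_k;x_k)+\psi(s_k;x_k))\ge(1-\theta_1)\hat\xi_{k,\mathrm{cp}}$. (A5) There is $\kappa_s\in(0,1]$ such that for all $k$, $\operatorname{argmin}_s m_{\mathrm{cp}}(s;x_k,\nu_k^{-1})\neq\emptyset$ and $\|\hat s_{k,\mathrm{cp}}\|\ge\kappa_s\min\{\|s\|\mid s\in\operatorname{argmin}_{s'} m_{\mathrm{cp}}(s';x_k,\nu_k^{-1})\}$. (A6) For all $k$: $|f(x_k)-\hat f(x_k)|\le\kappa_f\|s_k\|^2$, $|f(x_k+s_k)-\hat f(x_k+s_k)|\le\kappa_f\|s_k\|^2$, $\|\nabla f(x_k)-\hat\nabla f(x_k)\|\le\kappa_\nabla\|s_k\|$.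 (A7) $f+h$ is bounded below on $\mathbb{R}^n$. *)

From mathcomp Require Import all_boot all_order all_algebra.
From mathcomp Require Import all_classical all_reals.
Set Implicit Arguments.
Unset Strict Implicit.
Unset Printing Implicit Defensive.
Import Order.TTheory GRing.Theory Num.Theory.
Local Open Scope ring_scope.
Local Open Scope classical_set_scope.

Section Defs.
Variables (R : realType) (n : nat).
Notation vec := 'rV[R]_n.

Definition dotv (u v : vec) : R := (u *m v^T) 0 0.
Definition enorm (v : vec) : R := Num.sqrt (dotv v v).
Definition quadf (B : 'M[R]_n) (s : vec) : R := (s *m B *m s^T) 0 0.

Definition specnorm (B : 'M[R]_n) : R :=
  sup [set r | exists v : vec, enorm v <= 1 /\ r = enorm (v *m B)].

Definition cvg_along (N : nat -> bool) (a : nat -> vec) (l : vec) : Prop :=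
  forall eps : R, 0 < eps -> exists K : nat,
    forall k, N k -> (K <= k)%N -> enorm (a k - l) < eps.
Definition cvgR_along (N : nat -> bool) (a : nat -> R) (l : R) : Prop :=
  forall eps : R, 0 < eps -> exists K : nat,
    forall k, N k -> (K <= k)%N -> `|a k - l| < eps.

Definition infinite_idx (N : nat -> bool) : Prop :=
  forall m : nat, exists k, (m <= k)%N /\ N k.

Definition is_gradient (f : vec -> R) (g : vec -> vec) : Prop :=
  forall x : vec, forall eps : R, 0 < eps -> exists delta : R, 0 < delta /\
    forall s : vec, enorm s < delta ->
      `|f (x + s) - f x - dotv (g x) s| <= eps * enorm s.
Definition vcontinuous (g : vec -> vec) : Prop :=
  forall x : vec, forall eps : R, 0 < eps -> exists delta : R, 0 < delta /\
    forall y : vec, enorm (y - x) < delta -> enorm (g y - g x) < eps.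
Definition C1_with_gradient (f : vec -> R) (g : vec -> vec) : Prop :=
  is_gradient f g /\ vcontinuous g.

Definition proper_fun (phi : vec -> \bar R) : Prop :=
  (forall x, phi x != -oo%E) /\ (exists x, phi x \is a fin_num).
Definition lsc_fun (phi : vec -> \bar R) : Prop :=
  forall (x : vec) (t : R), (t%:E < phi x)%E -> exists delta : R, 0 < delta /\
    forall y : vec, enorm (y - x) < delta -> (t%:E < phi y)%E.

(* Frechet (regular) subdifferential (Rockafellar-Wets Def. 8.3) *)
Definition frechet_subgrad (phi : vec -> \bar R) (x v : vec) : Prop :=
  phi x \is a fin_num /\
  forall eps : R, 0 < eps -> exists delta : R, 0 < delta /\
    forall y : vec, enorm (y - x) < delta ->
      (phi x + (dotv v (y - x) - eps * enorm (y - x))%:E <= phi y)%E.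

Definition limiting_subgrad (phi : vec -> \bar R) (x v : vec) : Prop :=
  phi x \is a fin_num /\
  exists (xs vs : nat -> vec),
    (forall k, frechet_subgrad phi (xs k) (vs k)) /\
    cvg_along predT xs x /\
    cvgR_along predT (fun k => fine (phi (xs k))) (fine (phi x)) /\
    cvg_along predT vs v.

Definition limsup_sets (N : nat -> bool) (A : nat -> vec -> Prop) (v : vec) : Prop :=
  exists (N' : nat -> bool) (a : nat -> vec),
    (forall k, N' k -> N k) /\ infinite_idx N' /\
    (forall k, N' k -> A k (a k)) /\ cvg_along N' a v.

Definition is_argmin (g : vec -> \bar R) (s : vec) : Prop :=
  forall t : vec, (g s <= g t)%E.

Definition phi_cp (fh : R) (gh : vec) (s : vec) : R := fh + dotv gh s.
Definition m_cp (fh : R) (gh : vec) (psix : vec -> \bar R) (nuinv : R) (s : vec)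
  : \bar R :=
  ((phi_cp fh gh s + 2^-1 * nuinv * enorm s ^+ 2)%:E + psix s)%E.
Definition phi_q (fh : R) (gh : vec) (B : 'M[R]_n) (s : vec) : R :=
  fh + dotv gh s + 2^-1 * quadf B s.
Definition m_q (fh : R) (gh : vec) (B : 'M[R]_n) (psix : vec -> \bar R)
  (sigma : R) (s : vec) : \bar R :=
  ((phi_q fh gh B s + 2^-1 * sigma * enorm s ^+ 2)%:E + psix s)%E.

(* per-iteration quantities of iR2N, given the iterate x_k, B_k = B(x_k),
   sigma_k, the (final, refined) estimates fh = \hat f(x_k), fhp = \hat f(x_k+s_k),
   gh = \hat\nabla f(x_k), the model psix = psi(.;x_k), hat s_{k,cp} and s_k. *)
Definition nu_k (theta1 : R) (Bk : 'M[R]_n) (sigmak : R) : R :=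
  theta1 / (specnorm Bk + sigmak).
Definition xi_cp (fh : R) (gh : vec) (psix : vec -> \bar R) (scp : vec) : \bar R :=
  (((phi_cp fh gh (0%R : vec))%:E + psix (0%R : vec)) - ((phi_cp fh gh scp)%:E + psix scp))%E.
Definition pred_decrease (fh : R) (gh : vec) (Bk : 'M[R]_n) (psix : vec -> \bar R)
  (sk : vec) : \bar R :=
  (((phi_q fh gh Bk (0%R : vec))%:E + psix (0%R : vec)) - ((phi_q fh gh Bk sk)%:E + psix sk))%E.
Definition act_decrease (h : vec -> \bar R) (xk : vec) (fh fhp : R) (sk : vec)
  : \bar R :=
  (((fh)%:E + h xk) - ((fhp)%:E + h (xk + sk)%R))%E.
(* \hat rho_k (degenerate infinite / zero-denominator cases get the junk values
   of [fine] and of division by 0) *)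
Definition rho_hat (h : vec -> \bar R) (xk : vec) (fh fhp : R) (gh : vec)
  (Bk : 'M[R]_n) (psix : vec -> \bar R) (sk : vec) : R :=
  fine (act_decrease h xk fh fhp sk) / fine (pred_decrease fh gh Bk psix sk).

End Defs.

From mathcomp Require Import all_boot all_order all_algebra.
From mathcomp Require Import all_classical all_reals.
From mathcomp Require Import lra.
Import Order.TTheory GRing.Theory Num.Theory.
Local Open Scope ring_scope.

(* Hence
   [- grad f(xbar)] lies in the outer limit of these subdifferentials, so in
   [dpsi(0; xbar)], which is contained in [dh(xbar)]. *)

Section EuclideanNorm.
Context {R : realType} {n : nat}.
Implicit Types p q : 'rV[R]_n.

Lemma dotvE p q : dotv p q = \sum_i p 0 i * q 0 i.
Proof. by rewrite /dotv !mxE; apply: eq_bigr => i _; rewrite mxE. Qed.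

Lemma dotv_ge0 p : 0 <= dotv p p.
Proof. by rewrite dotvE; apply: sumr_ge0 => i _; rewrite -expr2 sqr_ge0. Qed.

Lemma dotvDD_le p q : dotv (p + q) (p + q) <= 2 * (dotv p p + dotv q q).
Proof.
rewrite !dotvE -big_split /= mulr_sumr; apply: ler_sum => i _.
by rewrite !mxE; have := sqr_ge0 (p 0 i - q 0 i); rewrite expr2; lra.
Qed.

Lemma enormN p : enorm (- p) = enorm p.
Proof.
rewrite /enorm !dotvE; congr Num.sqrt.
by apply: eq_bigr => i _; rewrite mxE mulrNN.
Qed.

Lemma enorm_ltE p (e : R) : 0 < e -> (enorm p < e) = (dotv p p < e ^+ 2).
Proof.
by move=> e0; rewrite /enorm -[RHS]ltr_sqrt ?exprn_gt0 // sqrtr_sqr gtr0_norm.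
Qed.

Lemma enormD_lt_half p q (e : R) : 0 < e ->
  enorm p < e / 2 -> enorm q < e / 2 -> enorm (p + q) < e.
Proof.
move=> e0; have e2 : 0 < e / 2 by rewrite divr_gt0.
rewrite !enorm_ltE // => hp hq.
apply: le_lt_trans (dotvDD_le p q) _.
by move: hp hq; rewrite !expr2; lra.
Qed.

End EuclideanNorm.

Section ConvergenceAlong.
Context {R : realType} {n : nat} {N : nat -> bool}.
Implicit Types a b : nat -> 'rV[R]_n.

Lemma cvg_alongD {a b l m} : cvg_along N a l -> cvg_along N b m ->
  cvg_along N (fun k => a k + b k) (l + m).
Proof.
move=> ha hb eps e0; have e2 : 0 < eps / 2 by rewrite divr_gt0.
have [Ka hKa] := ha _ e2; have [Kb hKb] := hb _ e2.
exists (maxn Ka Kb) => k Nk; rewrite geq_max => /andP[kKa kKb].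
rewrite opprD addrACA; exact: enormD_lt_half (hKa k Nk kKa) (hKb k Nk kKb).
Qed.

Lemma cvg_alongN {a l} : cvg_along N a l -> cvg_along N (fun k => - a k) (- l).
Proof.
move=> ha eps /ha[K hK]; exists K => k Nk kK.
by rewrite -opprD enormN; exact: hK.
Qed.

Lemma cvg_along_continuous {g : 'rV[R]_n -> 'rV[R]_n} {a l} :
  vcontinuous g -> cvg_along N a l -> cvg_along N (g \o a) (g l).
Proof.
move=> gc ha eps /(gc l)[delta [d0 hd]].
have [K hK] := ha _ d0; exists K => k Nk kK; exact/hd/hK.
Qed.

Lemma limsup_sets_cvg (A : nat -> 'rV[R]_n -> Prop) a l :
  infinite_idx N -> (forall k, N k -> A k (a k)) -> cvg_along N a l ->
  limsup_sets N A l.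
Proof. by move=> Ninf aA ha; exists N, a. Qed.

End ConvergenceAlong.

Theorem theorem3p10
  (R : realType) (n : nat)
  (* problem data: f in C^1 with gradient gradf, h proper lsc *)
  (f : 'rV[R]_n -> R) (gradf : 'rV[R]_n -> 'rV[R]_n)
  (h : 'rV[R]_n -> \bar R)
  (* model psi x s = psi(s; x) and the Hessian-approximation map x |-> B(x) *)
  (psi : 'rV[R]_n -> 'rV[R]_n -> \bar R)
  (B : 'rV[R]_n -> 'M[R]_n)
  (* algorithm constants *)
  (kappa_f kappa_grad gamma1 gamma2 gamma3 eta1 eta2 theta1 theta2 sigma_min : R)
  (* iterates: x_k, sigma_k, final estimates fh k = \hat f(x_k),
     fhp k = \hat f(x_k + s_k), gh k = \hat\nabla f(x_k), hat s_{k,cp}, s_k *)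
  (x : nat -> 'rV[R]_n) (sigma : nat -> R)
  (fh fhp : nat -> R) (gh : nat -> 'rV[R]_n)
  (scp s : nat -> 'rV[R]_n)
  (* constants of the assumptions *)
  (L kappa_B kappa_h kappa_s : R)
  (* data of the theorem *)
  (N : nat -> bool) (scpN u : nat -> 'rV[R]_n) (xbar : 'rV[R]_n) :
  (* standing assumptions on f, h, psi, B *)
  C1_with_gradient f gradf ->
  proper_fun h -> lsc_fun h ->
  (forall z, proper_fun (psi z) /\ lsc_fun (psi z)) ->
  (forall z, psi z 0 = h z) ->
  (forall z v, limiting_subgrad (psi z) 0 v -> limiting_subgrad h z v) ->
  (exists lambda : R, 0 < lambda /\
     forall z (lambda' : R), 0 < lambda' -> lambda' < lambda ->
       exists c : R, forall w,
         (c%:E <= psi z w + (enorm w ^+ 2 / (2 * lambda'))%:E)%E) ->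
  (forall z, (B z)^T = B z) ->
  (* constants *)
  0 < kappa_f -> 0 < kappa_grad ->
  0 < gamma3 -> gamma3 <= 1 -> 1 < gamma1 -> gamma1 <= gamma2 ->
  0 < eta1 -> eta1 <= eta2 -> eta2 < 1 ->
  0 < theta1 -> theta1 < 1 -> 1 < theta2 ->
  4 * kappa_f * theta1 * theta2 ^+ 2 / (eta1 * (1 - theta1)) < sigma_min ->
  sigma_min <= sigma 0%N ->
  (* Algorithm iR2N *)
  (forall k,
     (m_cp (fh k) (gh k) (psi (x k))
        (nu_k theta1 (B (x k)) (sigma k))^-1 (scp k)
      <= m_cp (fh k) (gh k) (psi (x k))
        (nu_k theta1 (B (x k)) (sigma k))^-1 0%R)%E) ->
  (forall k, exists s' : 'rV[R]_n,
     (m_q (fh k) (gh k) (B (x k)) (psi (x k)) (sigma k) s'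
      <= m_q (fh k) (gh k) (B (x k)) (psi (x k)) (sigma k) (scp k))%E /\
     s k = (if theta2 * enorm (scp k) < enorm s' then scp k else s')) ->
  (forall k, x k.+1 =
     (if eta1 <= rho_hat h (x k) (fh k) (fhp k) (gh k) (B (x k)) (psi (x k)) (s k)
      then x k + s k else x k)) ->
  (forall k,
     let rho := rho_hat h (x k) (fh k) (fhp k) (gh k) (B (x k)) (psi (x k)) (s k) in
     exists sigma' : R, sigma k.+1 = Num.max sigma' sigma_min /\
       (eta2 <= rho -> gamma3 * sigma k <= sigma' <= sigma k) /\
       (eta1 <= rho < eta2 -> sigma k <= sigma' <= gamma1 * sigma k) /\
       (rho < eta1 -> gamma1 * sigma k <= sigma' <= gamma2 * sigma k)) ->
  (* (A1) *)
  0 <= L ->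
  (forall z w, `|f (z + w) - f z - dotv (gradf z) w| <= 2^-1 * L * enorm w ^+ 2) ->
  (* (A2) *)
  (forall k, specnorm (B (x k)) <= kappa_B) ->
  (* (A3) *)
  (forall z w,
     (psi z w <= h (z + w)%R + (kappa_h * enorm w ^+ 2)%:E)%E /\
     (h (z + w)%R <= psi z w + (kappa_h * enorm w ^+ 2)%:E)%E) ->
  (* (A4) *)
  (forall k,
     ((1 - theta1)%:E * xi_cp (fh k) (gh k) (psi (x k)) (scp k)
      <= pred_decrease (fh k) (gh k) (B (x k)) (psi (x k)) (s k))%E) ->
  (* (A5) *)
  0 < kappa_s -> kappa_s <= 1 ->
  (forall k,
     let mk := m_cp (fh k) (gh k) (psi (x k)) (nu_k theta1 (B (x k)) (sigma k))^-1 in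
     exists s0 : 'rV[R]_n, is_argmin mk s0 /\
       (forall s1, is_argmin mk s1 -> enorm s0 <= enorm s1) /\
       kappa_s * enorm s0 <= enorm (scp k)) ->
  (* (A6) *)
  (forall k,
     `|f (x k) - fh k| <= kappa_f * enorm (s k) ^+ 2 /\
     `|f (x k + s k) - fhp k| <= kappa_f * enorm (s k) ^+ 2 /\
     enorm (gradf (x k) - gh k) <= kappa_grad * enorm (s k)) ->
  (* (A7) *)
  (exists c : R, forall z, (c%:E <= (f z)%:E + h z)%E) ->
  (* hypotheses of the theorem *)
  infinite_idx N ->
  (forall k, N k ->
     is_argmin (m_cp (fh k) (gh k) (psi (x k))
                  (nu_k theta1 (B (x k)) (sigma k))^-1) (scpN k) /\
     exists w, limiting_subgrad (psi (x k)) (scpN k) w /\ u k = gradf (x k) + w) ->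
  cvg_along N scpN 0 ->
  cvg_along N u 0 ->
  cvg_along N x xbar ->
  (forall v, limsup_sets N (fun k => limiting_subgrad (psi (x k)) (scpN k)) v ->
     limiting_subgrad (psi xbar) 0 v) ->
  (* conclusion: 0 \in \nabla f(xbar) + \partial h(xbar) *)
  exists v, limiting_subgrad h xbar v /\ gradf xbar + v = 0.
Proof.
move=> [_ grad_cont] _ _ _ _ psi0_sub_h _ _ _ _ _ _ _ _ _ _ _ _ _ _ _ _ _ _ _ _ _
  _ _ _ _ _ _ _ _ _ Ninf scpN_subgrad _ u_cvg x_cvg outer_limit.
exists (- gradf xbar); split; last by rewrite subrr.
apply/psi0_sub_h/outer_limit.
apply: (@limsup_sets_cvg _ _ _ _ (fun k => u k - gradf (x k))) => //.
  move=> k /scpN_subgrad[_ [w [w_subgrad ->]]].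
  by rewrite addrAC subrr add0r.
rewrite -[- gradf xbar]add0r.
have grad_cvg := cvg_along_continuous grad_cont x_cvg.
exact: cvg_alongD u_cvg (cvg_alongN grad_cvg).
Qed.
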